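(* The family $\mathcal{P}$ of pdCGs on the vertex set $V$, equipped with the twin order $\preceq_t$, is a complete distributive lattice. For $\mathcal{G},\mathcal{H}\in\mathcal{P}$ with quadruplet representations $\mathcal{G}=(V,E_{\mathcal{G}},\mathbb{L}_{\mathcal{G}},\mathbb{E}_{\mathcal{G}})$, $\mathcal{H}=(V,E_{\mathcal{H}},\mathbb{L}_{\mathcal{H}},\mathbb{E}_{\mathcal{H}})$: (i) the meet is $\mathcal{G}\wedge_t\mathcal{H}=(V,\,E_{\mathcal{G}}\cap E_{\mathcal{H}},\,\mathbb{L}_{\mathcal{G}}\cap\mathbb{L}_{\mathcal{H}},\,\mathbb{E}_{\mathcal{G}}\cap\mathbb{E}_{\mathcal{H}})$; (ii) the join is $\mathcal{G}\vee_t\mathcal{H}=(V,\,E_{\mathcal{G}}\cup E_{\mathcal{H}},\,\mathbb{L}_{\mathcal{G}}\cup\mathbb{L}_{\mathcal{H}},\,\mathbb{E}_{\mathcal{G}}\cup\mathbb{E}_{\mathcal{H}})$. Furthermore, the maximum element is $\hat 1=(V,F_V,L,F_L)$ (the complete graph with all colour classes atomic) and the minimum element is $\hat 0=(V,\emptyset,\emptyset,\emptyset)$ (the graph with no edges in which all vertices belong to twin-pairing classes).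
   Context: Let $V=\{1,\dots,p\}$ and let $\tau:V\to V$ be a twin-pairing function: $\tau(i)=j$ implies $\tau(j)=i$, and there is a partition $V=L\cup R$, $L\cap R=\emptyset$, with $\tau(L)=R$; vertices are numbered so that $L=\{1,\dots,q\}$, $R=\{q+1,\dots,p\}$. Let $F_V=\{(i,j)\mid i,j\in V,\ i<j\}$; extend $\tau$ to edges by $\tau(i,j)=(\tau(i),\tau(j))$ (endpoints reordered to lie in $F_V$) and to sets elementwise. Let $F_L=\{(i,j)\in F_V\mid i<\tau(j)\}$, $F_R=\{(i,j)\in F_V\mid i>\tau(j)\}$. A coloured graph is a pair $(\mathcal{V},\mathcal{E})$ with $\mathcal{V}$ a partition of $V$ and $\mathcal{E}$ a partition of an edge set $E\subseteq F_V$. A colour class is atomic if it has one element and twin-pairing if it is $\{i,\tau(i)\}$ or $\{(i,j),\tau(i,j)\}$ with $(i,j)\neq\tau(i,j)$. A pdCG is a coloured graph all of whose classes are atomic or twin-pairing; $\mathcal{P}$ is the set of pdCGs on $V$. Each pdCG $\mathcal{G}=(\mathcal{V},\mathcal{E})$ is identified with its quadruplet $(V,E_{\mathcal{G}},\mathbb{L}_{\mathcal{G}},\mathbb{E}_{\mathcal{G}})$, where $E_{\mathcal{G}}$ is its edge set, $\mathbb{L}_{\mathcal{G}}=\{i\in L\mid\{i\}\in\mathcal{V}\}$, and $\mathbb{E}_{\mathcal{G}}=\{(i,j)\in E_L\cap\tau(E_R)\mid\{(i,j)\}\in\mathcal{E}\}$ with $E_L=E_{\mathcal{G}}\cap F_L$,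 $E_R=E_{\mathcal{G}}\cap F_R$; this identification is a bijection between $\mathcal{P}$ and the quadruplets $(V,E,\mathbb{L},\mathbb{E})$ with $E\subseteq F_V$, $\mathbb{L}\subseteq L$, $\mathbb{E}\subseteq (E\cap F_L)\cap\tau(E\cap F_R)$. The twin order: $\mathcal{H}\preceq_t\mathcal{G}$ iff $E_{\mathcal{H}}\subseteq E_{\mathcal{G}}$, $\mathbb{L}_{\mathcal{H}}\subseteq\mathbb{L}_{\mathcal{G}}$ and $\mathbb{E}_{\mathcal{H}}\subseteq\mathbb{E}_{\mathcal{G}}$. *)

(* Vertices V = {1..p} are modelled by 'I_p = {0..p-1}
   (shift by one), L = {0..q-1}, R = {q..p-1}. *)
From mathcomp Require Import all_boot.
Set Implicit Arguments. Unset Strict Implicit. Unset Printing Implicit Defensive.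

Section PDCG.
Variables (p q : nat) (tau : 'I_p -> 'I_p).

Definition Lset : {set 'I_p} := [set i : 'I_p | (nat_of_ord i < q)%N].
Definition Rset : {set 'I_p} := [set i : 'I_p | (q <= nat_of_ord i)%N].

Definition FV : {set 'I_p * 'I_p} := [set e : 'I_p * 'I_p | (nat_of_ord e.1 < nat_of_ord e.2)%N].

Definition tauE (e : 'I_p * 'I_p) : 'I_p * 'I_p :=
  if (nat_of_ord (tau e.1) < nat_of_ord (tau e.2))%N then (tau e.1, tau e.2) else (tau e.2, tau e.1).

Definition FL : {set 'I_p * 'I_p} := [set e in FV | (nat_of_ord e.1 < nat_of_ord (tau e.2))%N].
Definition FR : {set 'I_p * 'I_p} := [set e in FV | (nat_of_ord (tau e.2) < nat_of_ord e.1)%N].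

(* a (candidate) coloured graph: a vertex partition and an edge partition *)
Definition cgraph := ({set {set 'I_p}} * {set {set ('I_p * 'I_p)}})%type.

Definition is_cgraph (G : cgraph) : bool :=
  [&& partition G.1 [set: 'I_p], partition G.2 (cover G.2) & cover G.2 \subset FV].

Definition atomic (T : finType) (C : {set T}) : bool := #|C| == 1.
Definition vtwin (C : {set 'I_p}) : bool := [exists i, C == [set i; tau i]].
Definition etwin (C : {set 'I_p * 'I_p}) : bool :=
  [exists e, (C == [set e; tauE e]) && (e != tauE e)].

Definition is_pdCG (G : cgraph) : bool :=
  [&& is_cgraph G,
      [forall C in G.1, atomic C || vtwin C] &
      [forall C in G.2, atomic C || etwin C]].

Definition pdCGs : {set cgraph} := [set G | is_pdCG G].

Definition E_of (G : cgraph) : {set 'I_p * 'I_p} := cover G.2.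
Definition LL_of (G : cgraph) : {set 'I_p} := [set i in Lset | [set i] \in G.1].
Definition EE_of (G : cgraph) : {set 'I_p * 'I_p} :=
  [set e in (E_of G :&: FL) :&: (tauE @: (E_of G :&: FR)) | [set e] \in G.2].

Definition twin_le (G H : cgraph) : bool :=
  [&& E_of G \subset E_of H, LL_of G \subset LL_of H & EE_of G \subset EE_of H].

End PDCG.

Section OrderNotions.
Variables (T : finType) (P : {set T}) (le : rel T).

Definition is_partial_order_on : Prop :=
  [/\ forall x, x \in P -> le x x,
      forall x y, x \in P -> y \in P -> le x y -> le y x -> x = y &
      forall x y z, x \in P -> y \in P -> z \in P -> le x y -> le y z -> le x z].

Definition is_lub (S : {set T}) (x : T) : Prop :=
  [/\ x \in P, forall y, y \in S -> le y x &
      forall z, z \in P -> (forall y, y \in S -> le y z) -> le x z].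

Definition is_glb (S : {set T}) (x : T) : Prop :=
  [/\ x \in P, forall y, y \in S -> le x y &
      forall z, z \in P -> (forall y, y \in S -> le z y) -> le z x].

Definition is_complete_lattice_on : Prop :=
  is_partial_order_on /\
  forall S : {set T}, S \subset P -> (exists x, is_lub S x) /\ (exists x, is_glb S x).

Definition is_distributive_on : Prop :=
  forall x y z yz xyz xy xz r,
    x \in P -> y \in P -> z \in P ->
    is_lub [set y; z] yz -> is_glb [set x; yz] xyz ->
    is_glb [set x; y] xy -> is_glb [set x; z] xz -> is_lub [set xy; xz] r ->
    xyz = r.
End OrderNotions.

From mathcomp Require Import all_boot zify.
Set Implicit Arguments. Unset Strict Implicit. Unset Printing Implicit Defensive.

(* A pdCG consists of a vertex partition and an edge partition whose classes
   are singletons or twin pairs, and such a partition is determined by its set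
   of singleton classes.  Twins are atomic together, and an edge whose twin is
   not an edge is necessarily atomic, so the only free choices are recorded by
   the quadruplet: the pair {i, tau i} is split iff its member in L lies in LL,
   and the pair {e, tau e} of edges is split iff its member in F_L lies in EE.
   Hence G |-> (E_G, LL_G, EE_G) is an order isomorphism from the twin order
   onto the admissible quadruplets ordered componentwise by inclusion.  These
   are closed under arbitrary unions and under intersections capped by
   (F_V, L, F_L), so suprema and infima are computed componentwise, and the
   lattice is a sublattice of a product of powerset lattices, hence
   distributive. *)

Lemma mem_set1_partition (T : finType) (P : {set {set T}}) (D : {set T}) x :
  partition P D -> x \in D -> ([set x] \in P) = (pblock P x == [set x]).
Proof.
case/and3P => /eqP covP tiP _ Dx; apply/idP/eqP => [Px | <-].
  exact: def_pblock (set11 x).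
by apply: pblock_mem; rewrite covP.
Qed.

Lemma mem_cover_pblock (T : finType) (P : {set {set T}}) x y :
  trivIset P -> y \in pblock P x -> y \in cover P.
Proof. by move=> tiP yPx; rewrite -mem_pblock (same_pblock tiP yPx). Qed.

Lemma eq_in_equivalence_partition (T : finType) (R R' : rel T) (D : {set T}) :
  {in D &, R =2 R'} -> equivalence_partition R D = equivalence_partition R' D.
Proof.
move=> eqR; apply: eq_in_imset => x Dx; apply/setP => y; rewrite !inE.
by case Dy: (y \in D); rewrite //= eqR.
Qed.

Lemma pblock_equivalence_partitionE (T : finType) (R : rel T) (D : {set T}) x :
  {in D & &, equivalence_rel R} -> x \in D ->
  pblock (equivalence_partition R D) x = [set y in D | R x y].
Proof.
move=> eqiR Dx; have /and3P [_ tiP _] := equivalence_partitionP eqiR.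
apply: def_pblock => //; first exact: imset_f.
by rewrite inE Dx (eqiR x x x Dx Dx Dx).1.
Qed.

Section PairPartition.
Variables (T : finType) (sigma : T -> T) (D : {set T}).
Hypothesis sigmaK : {in D, involutive sigma}.

Definition pair_block (C : {set T}) : bool :=
  [exists x, (C == [set x]) || (C == [set x; sigma x])].

(* sigma need not map D into D: the twin of an edge may be a non-edge. *)
Definition paired (A : {set T}) x : bool :=
  [&& sigma x \in D, sigma x != x, x \notin A & sigma x \notin A].

Definition pair_rel A : rel T := fun x y => (y == x) || paired A x && (y == sigma x).

Definition pair_partition A := equivalence_partition (pair_rel A) D.

Lemma paired_sigma A x : x \in D -> sigma x \in D -> paired A (sigma x) = paired A x.
Proof.
move=> Dx Dsx; rewrite /paired sigmaK // Dx Dsx [sigma x == x]eq_sym.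
by rewrite [~~ (sigma x \in A) && _]andbC.
Qed.

Lemma pair_rel_equiv A : {in D & &, equivalence_rel (pair_rel A)}.
Proof.
move=> x y z Dx _ _; split; first by rewrite /pair_rel eqxx.
case/orP => [/eqP -> // | /andP [pax /eqP ->]].
have Dsx : sigma x \in D by case/and4P: pax.
by rewrite /pair_rel paired_sigma // pax sigmaK // orbC.
Qed.

Lemma pair_partitionP A : partition (pair_partition A) D.
Proof. exact: equivalence_partitionP (@pair_rel_equiv A). Qed.

Lemma pblock_pair_partition A x : x \in D ->
  pblock (pair_partition A) x = if paired A x then [set x; sigma x] else [set x].
Proof.
move=> Dx; rewrite pblock_equivalence_partitionE //; last exact: pair_rel_equiv.
apply/setP => y; rewrite /pair_rel; case: ifP => pax; rewrite !inE ?andbF ?orbF.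
  have Dsx : sigma x \in D by case/and4P: pax.
  case: (eqVneq y x) => [-> | _]; first by rewrite Dx.
  by case: (eqVneq y (sigma x)) => [-> | _]; rewrite ?Dsx ?orbT ?andbF.
by case: (eqVneq y x) => [-> | _]; rewrite ?Dx ?andbF.
Qed.

Lemma pair_block_pair_partition A C : C \in pair_partition A -> pair_block C.
Proof.
move=> /imsetP [x Dx ->]; rewrite -pblock_equivalence_partitionE //; last exact: pair_rel_equiv.
rewrite pblock_pair_partition //; apply/existsP; exists x.
by case: ifP; rewrite eqxx ?orbT.
Qed.

Lemma mem_set1_pair_partition A x :
  ([set x] \in pair_partition A) = (x \in D) && ~~ paired A x.
Proof.
have partA := pair_partitionP A; case Dx: (x \in D); last first.
  apply: contraFF Dx => Px; rewrite -(cover_partition partA).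
  by apply/bigcupP; exists [set x]; rewrite ?set11.
rewrite (mem_set1_partition partA Dx) pblock_pair_partition //.
case: ifP => [/and4P [_ nx _ _] | _]; last by rewrite eqxx.
by apply/negbTE/eqP => set1E; have := cards1 x; rewrite -set1E cards2 eq_sym nx.
Qed.

Lemma mem_set1_pair_partition_sigma A x : x \in D -> sigma x \in D ->
  ([set sigma x] \in pair_partition A) = ([set x] \in pair_partition A).
Proof.
by move=> Dx Dsx; rewrite !mem_set1_pair_partition paired_sigma // Dx Dsx.
Qed.

Lemma eq_pair_partition A B :
  {in D, paired A =1 paired B} -> pair_partition A = pair_partition B.
Proof.
move=> eqAB; apply: eq_in_equivalence_partition => x y Dx _.
by rewrite /pair_rel eqAB.
Qed.

Lemma pblock_pair P x : partition P D -> {in P, forall C, pair_block C} -> x \in D ->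
  pblock P x = [set x] \/ pblock P x = [set x; sigma x].
Proof.
case/and3P => /eqP covP tiP _ blocks Dx.
have xPx : x \in pblock P x by rewrite mem_pblock covP.
have PPx : pblock P x \in P by rewrite pblock_mem ?covP.
have /existsP [z /orP [/eqP Pz | /eqP Pz]] := blocks _ PPx.
  by left; move: xPx; rewrite Pz inE => /eqP ->.
have Dz : z \in D by rewrite -covP (mem_cover_pblock (x := x)) // Pz set21.
right; move: xPx; rewrite Pz !inE => /orP [/eqP -> // | /eqP ->].
by rewrite sigmaK // setUC.
Qed.

Lemma pair_partition_of_blocks P : partition P D -> {in P, forall C, pair_block C} ->
  P = pair_partition [set x | [set x] \in P].
Proof.
move=> partP blocks; have /and3P [/eqP covP tiP _] := partP.
rewrite -{1}(equivalence_partition_pblock partP).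
apply: eq_in_equivalence_partition => x y Dx _; rewrite /pair_rel /paired !inE.
have inD z : z \in pblock P x -> z \in D by rewrite -covP; apply: mem_cover_pblock.
have [Px | [Px nsx]] : pblock P x = [set x] \/ pblock P x = [set x; sigma x] /\ sigma x != x.
  case: (pblock_pair partP blocks Dx) => Px; first by left.
  by case: (eqVneq (sigma x) x) => [sx | nsx]; [left; rewrite Px sx setUid | right].
- have -> : [set x] \in P by rewrite -Px pblock_mem ?covP.
  by rewrite Px inE !andbF orbF.
- have not_atomic z : z \in [set x; sigma x] -> ([set z] \in P) = false.
    rewrite -Px => zPx; rewrite (mem_set1_partition partP (inD z zPx)) (same_pblock tiP zPx) Px.
    by apply/negbTE/eqP => set1E; have := cards1 z; rewrite -set1E cards2 eq_sym nsx.
  by rewrite Px !inE inD ?Px ?set22 // nsx !not_atomic ?set21 ?set22.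
Qed.

End PairPartition.

Section OrderFacts.
Variables (T : finType) (P : {set T}) (le : rel T).
Hypothesis le_order : is_partial_order_on P le.

Lemma lub_unique S x y : is_lub P le S x -> is_lub P le S y -> x = y.
Proof.
case: le_order => _ anti _ [xP xub xl] [yP yub yl].
by apply: anti => //; [apply: xl | apply: yl].
Qed.

Lemma glb_unique S x y : is_glb P le S x -> is_glb P le S y -> x = y.
Proof.
case: le_order => _ anti _ [xP xlb xg] [yP ylb yg].
by apply: anti => //; [apply: yg | apply: xg].
Qed.

End OrderFacts.

Section TwinPairing.
Variables (p q : nat) (tau : 'I_p -> 'I_p).
Hypothesis tauK : involutive tau.
Hypothesis tau_LR : tau @: Lset p q = Rset p q.

Local Notation tE := (tauE tau).
Local Notation FV := (FV p).
Local Notation FL := (FL tau).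
Local Notation FR := (FR tau).
Local Notation P := (pdCGs tau).
Local Notation le := (twin_le q tau).
Implicit Types (E EE : {set 'I_p * 'I_p}) (LL : {set 'I_p}).
Implicit Types (G H : cgraph p) (S : {set cgraph p}).

Lemma tau_ltq i : (tau i < q) = (q <= i).
Proof.
case: (ltnP i q) => iq.
  have : tau i \in Rset p q by rewrite -tau_LR imset_f // inE.
  by rewrite inE ltnNge => ->.
have : i \in Rset p q by rewrite inE.
by rewrite -tau_LR => /imsetP [j]; rewrite inE => jq ->; rewrite tauK.
Qed.

Lemma tau_neq i : tau i != i.
Proof. by apply/eqP => taui; have := tau_ltq i; rewrite taui; lia. Qed.

Lemma eq_tau_val (i j : 'I_p) : (val (tau i) == val j) = (val i == val (tau j)).
Proof. by apply/eqP/eqP => [/val_inj <- | /val_inj ->]; rewrite tauK. Qed.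

Lemma eq_tau2_val (i j : 'I_p) : (val (tau i) == val (tau j)) = (val i == val j).
Proof. by rewrite eq_tau_val tauK. Qed.

Lemma tauE_FV e : e \in FV -> tE e \in FV.
Proof.
case: e => a b; rewrite /tauE !inE /= => ab.
by have := eq_tau2_val a b; case: ifP => /= ?; lia.
Qed.

Lemma tauEK : {in FV, involutive tE}.
Proof.
case=> a b; rewrite /tauE !inE /= => ab.
have := eq_tau2_val a b.
by case: (ltnP (tau a) (tau b)) => /= ? ?; rewrite !tauK; case: ifP => //; lia.
Qed.

Lemma tauEK_sub E : E \subset FV -> {in E, involutive tE}.
Proof. by move=> EFV e /(subsetP EFV); apply: tauEK. Qed.

Lemma tauE_FR e : e \in FV -> (tE e \in FR) = (e \in FL).
Proof.
case: e => a b; rewrite /tauE /FL /FR !inE /= => ab.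
have := eq_tau_val a b; have := eq_tau_val b a; have := eq_tau2_val a b.
have := tau_ltq a; have := tau_ltq b.
by case: ifP => /= *; rewrite ?tauK /=; lia.
Qed.

Lemma tauE_FL e : e \in FV -> (tE e \in FL) = (e \in FR).
Proof. by move=> eFV; rewrite -tauE_FR ?tauEK ?tauE_FV. Qed.

Lemma FL_sub_FV : FL \subset FV.
Proof. by apply/subsetP => e; rewrite inE => /andP []. Qed.

Lemma FR_sub_FV : FR \subset FV.
Proof. by apply/subsetP => e; rewrite inE => /andP []. Qed.

Lemma FL_notin_FR e : e \in FL -> e \notin FR.
Proof. by rewrite /FL /FR !inE; lia. Qed.

Lemma tauE_neq_FL e : e \in FL -> tE e != e.
Proof.
move=> eFL; apply/eqP => fixed_e; have := FL_notin_FR eFL.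
by rewrite -{1}fixed_e tauE_FR ?eFL // (subsetP FL_sub_FV).
Qed.

Lemma FL_or_FR e : e \in FV -> tE e != e -> (e \in FL) || (e \in FR).
Proof.
case: e => a b; rewrite /tauE /FL /FR !inE /= => ab.
have := eq_tau_val a b; have := eq_tau_val b a; have := eq_tau2_val a b.
by case: ifP => /= ? ? ? ?; rewrite xpair_eqE -!val_eqE /=; lia.
Qed.

Definition is_quadruplet E LL EE : bool :=
  [&& E \subset FV, LL \subset Lset p q & EE \subset (E :&: FL) :&: tE @: (E :&: FR)].

(* The inverse of the quadruplet map. *)
Definition pdCG_of E LL EE : cgraph p :=
  (pair_partition tau [set: 'I_p] LL, pair_partition tE E EE).

Lemma mem_twin_edges E e : E \subset FV ->
  (e \in (E :&: FL) :&: tE @: (E :&: FR)) = [&& e \in E, e \in FL & tE e \in E].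
Proof.
move=> EFV; rewrite !in_setI; case eE: (e \in E); case eFL: (e \in FL) => //=.
have eFV := subsetP EFV e eE.
apply/imsetP/idP => [[f /setIP [fE fFR] ->] | tEe].
  by rewrite tauEK // (subsetP FR_sub_FV).
by exists (tE e); rewrite ?tauEK // inE tEe tauE_FR.
Qed.

Lemma atomic_or_vtwinE C : (atomic C || vtwin tau C) = pair_block tau C.
Proof.
apply/orP/existsP => [[/cards1P [x ->] | /existsP [x /eqP ->]] | [x /orP [/eqP -> | /eqP ->]]].
- by exists x; rewrite eqxx.
- by exists x; rewrite eqxx orbT.
- by left; rewrite /atomic cards1.
- by right; apply/existsP; exists x.
Qed.

Lemma atomic_or_etwinE C : (atomic C || etwin tau C) = pair_block tE C.
Proof.
apply/orP/existsP => [[/cards1P [x ->] | /existsP [x /andP [/eqP -> _]]]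
                    | [x /orP [/eqP -> | /eqP ->]]].
- by exists x; rewrite eqxx.
- by exists x; rewrite eqxx orbT.
- by left; rewrite /atomic cards1.
case: (eqVneq (tE x) x) => [-> | nx]; first by left; rewrite setUid /atomic cards1.
by right; apply/existsP; exists x; rewrite eqxx eq_sym nx.
Qed.

Lemma pdCG_of_pdCG E LL EE : E \subset FV -> pdCG_of E LL EE \in P.
Proof.
move=> EFV; have partV := pair_partitionP (in1W tauK) LL.
have partE := pair_partitionP (tauEK_sub EFV) EE.
rewrite inE /is_pdCG /is_cgraph /= partV (cover_partition partE) partE EFV /=.
apply/andP; split; apply/forall_inP => C.
  by move/(pair_block_pair_partition (in1W tauK)); rewrite atomic_or_vtwinE.
by move/(pair_block_pair_partition (tauEK_sub EFV)); rewrite atomic_or_etwinE.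
Qed.

Lemma E_of_pdCG_of E LL EE : E \subset FV -> E_of (pdCG_of E LL EE) = E.
Proof. by move=> EFV; apply: cover_partition (pair_partitionP (tauEK_sub EFV) EE). Qed.

Lemma LL_of_pdCG_of E LL EE : LL \subset Lset p q -> LL_of q (pdCG_of E LL EE) = LL.
Proof.
move=> LLL; have LLq i : i \in LL -> i < q by move/(subsetP LLL); rewrite inE.
apply/setP => i; rewrite /LL_of inE (mem_set1_pair_partition (in1W tauK)) /paired !inE tau_neq /=.
case iLL: (i \in LL); first by rewrite (LLq _ iLL).
case tLL: (tau i \in LL); last by rewrite andbF.
by rewrite ltnNge -tau_ltq LLq.
Qed.

Lemma EE_of_pdCG_of E LL EE : is_quadruplet E LL EE -> EE_of tau (pdCG_of E LL EE) = EE.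
Proof.
case/and3P => EFV _ EEtw; have EEtw' e : e \in EE -> [&& e \in E, e \in FL & tE e \in E].
  by move/(subsetP EEtw); rewrite mem_twin_edges.
apply/setP => e; rewrite /EE_of inE E_of_pdCG_of // mem_twin_edges //.
rewrite (mem_set1_pair_partition (tauEK_sub EFV)).
case: (boolP (e \in EE)) => eEE.
  by have /and3P [-> -> ->] := EEtw' e eEE; rewrite /paired eEE !andbF.
apply/negbTE/negP => /and3P [/and3P [eE eFL tEe] _ /negP]; apply.
rewrite /paired tEe tauE_neq_FL // eEE /=.
apply/negP => /EEtw' /and3P [_ tEeFL _]; move: (FL_notin_FR eFL).
by rewrite -tauE_FL ?(subsetP EFV) ?tEeFL.
Qed.

Lemma is_quadruplet_of G : G \in P ->
  is_quadruplet (E_of G) (LL_of q G) (EE_of tau G).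
Proof.
rewrite inE => /and3P [/and3P [_ _ EFV] _ _]; rewrite /is_quadruplet EFV /=.
by apply/andP; split; apply/subsetP => x; rewrite inE => /andP [].
Qed.

Lemma pdCG_vertices G : G \in P -> G.1 = pair_partition tau [set: 'I_p] (LL_of q G).
Proof.
rewrite inE => /and3P [/and3P [partV _ _] /forall_inP blocks _].
have {}blocks : {in G.1, forall C, pair_block tau C} by move=> C /blocks; rewrite atomic_or_vtwinE.
have G1_eq := pair_partition_of_blocks (in1W tauK) partV blocks.
have single_tau i : ([set tau i] \in G.1) = ([set i] \in G.1).
  by rewrite G1_eq (mem_set1_pair_partition_sigma (in1W tauK)) ?inE.
rewrite {1}G1_eq; apply: eq_pair_partition => i _.
rewrite /paired !inE single_tau tau_ltq.
by case: ([set i] \in G.1); case: ltnP.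
Qed.

Lemma pdCG_edges G : G \in P -> G.2 = pair_partition tE (E_of G) (EE_of tau G).
Proof.
rewrite inE => /and3P [/and3P [_ partE EFV] _ /forall_inP blocks].
have {}blocks : {in G.2, forall C, pair_block tE C} by move=> C /blocks; rewrite atomic_or_etwinE.
have tEK := tauEK_sub EFV.
have G2_eq := pair_partition_of_blocks tEK partE blocks.
have single_tE e : e \in E_of G -> tE e \in E_of G -> ([set tE e] \in G.2) = ([set e] \in G.2).
  by move=> eE tEe; rewrite G2_eq (mem_set1_pair_partition_sigma tEK).
have mem_EE e : (e \in EE_of tau G) =
    [&& e \in E_of G, e \in FL, tE e \in E_of G & [set e] \in G.2].
  by rewrite /EE_of inE mem_twin_edges // -!andbA.
rewrite {1}G2_eq; apply: eq_pair_partition => e eE; rewrite /paired inE.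
case: (boolP (tE e \in E_of G)) => //= tEe; case: (boolP (tE e != e)) => //= ne.
have eFV := subsetP EFV e eE.
rewrite !mem_EE eE tEe tauEK // eE inE single_tE // tauE_FL //.
(* Of the twins e and tE e, the one in F_L records in EE whether they are split. *)
have := FL_or_FR eFV ne; have := @FL_notin_FR e.
by case: (e \in FL); case: (e \in FR); case: ([set e] \in G.2).
Qed.

Lemma pdCG_ofK G : G \in P -> pdCG_of (E_of G) (LL_of q G) (EE_of tau G) = G.
Proof. by case: G => V Ed GP; rewrite /pdCG_of -pdCG_vertices // -pdCG_edges. Qed.

Lemma pdCG_quadruplet_sub G : G \in P ->
  [/\ E_of G \subset FV, LL_of q G \subset Lset p q & EE_of tau G \subset FL].
Proof.
move/is_quadruplet_of => /and3P [EFV LLL EEtw]; split => //.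
by apply: subset_trans EEtw _; rewrite -setIA subIset // orbC subsetIl.
Qed.

Lemma pdCG_eq G H : G \in P -> H \in P -> E_of G = E_of H ->
  LL_of q G = LL_of q H -> EE_of tau G = EE_of tau H -> G = H.
Proof. by move=> GP HP eqE eqLL eqEE; rewrite -(pdCG_ofK GP) -(pdCG_ofK HP) eqE eqLL eqEE. Qed.

Lemma twin_le_order : is_partial_order_on P le.
Proof.
split.
- by move=> G _; rewrite /twin_le !subxx.
- move=> G H GP HP /and3P [sE sLL sEE] /and3P [sE' sLL' sEE'].
  by apply: pdCG_eq => //; apply/eqP; rewrite eqEsubset ?sE ?sLL ?sEE.
- move=> G H K _ _ _ /and3P [sE sLL sEE] /and3P [sE' sLL' sEE'].
  by apply/and3P; split; [apply: subset_trans sE sE' | apply: subset_trans sLL sLL'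
                         | apply: subset_trans sEE sEE'].
Qed.

Definition sup_pdCG S : cgraph p :=
  pdCG_of (\bigcup_(G in S) E_of G) (\bigcup_(G in S) LL_of q G) (\bigcup_(G in S) EE_of tau G).

(* The cap makes the infimum of the empty family the top element. *)
Definition inf_pdCG S : cgraph p :=
  pdCG_of (FV :&: \bigcap_(G in S) E_of G) (Lset p q :&: \bigcap_(G in S) LL_of q G)
          (FL :&: \bigcap_(G in S) EE_of tau G).

Lemma is_quadruplet_sup S : S \subset P -> is_quadruplet
  (\bigcup_(G in S) E_of G) (\bigcup_(G in S) LL_of q G) (\bigcup_(G in S) EE_of tau G).
Proof.
move=> SP; have quadS G : G \in S -> is_quadruplet (E_of G) (LL_of q G) (EE_of tau G).
  by move=> GS; apply/is_quadruplet_of/(subsetP SP).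
apply/and3P; split; apply/bigcupsP => G GS; have /and3P [EFV LLL EEtw] := quadS G GS => //.
have sE : E_of G \subset \bigcup_(G in S) E_of G by apply: bigcup_sup.
by apply: subset_trans EEtw _; apply: setISS; [apply: setSI | apply/imsetS/setSI].
Qed.

Lemma is_quadruplet_inf S : S \subset P -> is_quadruplet (FV :&: \bigcap_(G in S) E_of G)
  (Lset p q :&: \bigcap_(G in S) LL_of q G) (FL :&: \bigcap_(G in S) EE_of tau G).
Proof.
move=> SP; rewrite /is_quadruplet !subsetIl /=.
apply/subsetP => e /setIP [eFL /bigcapP eEE]; have eFV := subsetP FL_sub_FV e eFL.
rewrite mem_twin_edges ?subsetIl // !in_setI eFV eFL tauE_FV //=.
have twin_G G : G \in S -> (e \in E_of G) && (tE e \in E_of G).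
  move=> GS; have /is_quadruplet_of/and3P [EFV _ EEtw] := subsetP SP G GS.
  by have := subsetP EEtw e (eEE G GS); rewrite mem_twin_edges // => /and3P [-> _ ->].
by apply/andP; split; apply/bigcapP => G /twin_G /andP [].
Qed.

Lemma sup_pdCG_lub S : S \subset P -> is_lub P le S (sup_pdCG S).
Proof.
move=> SP; have quadS := is_quadruplet_sup SP; have /and3P [EFV LLL _] := quadS.
split; first exact: pdCG_of_pdCG.
  move=> G GS; rewrite /twin_le E_of_pdCG_of // LL_of_pdCG_of // EE_of_pdCG_of //.
  by apply/and3P; split; apply: bigcup_sup GS.
move=> K _ ubK; rewrite /twin_le E_of_pdCG_of // LL_of_pdCG_of // EE_of_pdCG_of //.
by apply/and3P; split; apply/bigcupsP => G /ubK /and3P [].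
Qed.

Lemma inf_pdCG_glb S : S \subset P -> is_glb P le S (inf_pdCG S).
Proof.
move=> SP; have quadS := is_quadruplet_inf SP; have /and3P [EFV LLL _] := quadS.
split; first exact: pdCG_of_pdCG.
  move=> G GS; rewrite /twin_le E_of_pdCG_of // LL_of_pdCG_of // EE_of_pdCG_of //.
  by apply/and3P; split; apply: subset_trans (subsetIr _ _) (bigcap_inf G GS).
move=> K KP lbK; rewrite /twin_le E_of_pdCG_of // LL_of_pdCG_of // EE_of_pdCG_of //.
have [KE KLL KEE] := pdCG_quadruplet_sub KP.
by apply/and3P; split; rewrite subsetI ?KE ?KLL ?KEE; apply/bigcapsP => G /lbK /and3P [].
Qed.

Lemma lub_quadruplet S J : S \subset P -> is_lub P le S J ->
  [/\ E_of J = \bigcup_(G in S) E_of G, LL_of q J = \bigcup_(G in S) LL_of q G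
    & EE_of tau J = \bigcup_(G in S) EE_of tau G].
Proof.
move=> SP lubJ; rewrite (lub_unique twin_le_order lubJ (sup_pdCG_lub SP)).
have quadS := is_quadruplet_sup SP; have /and3P [EFV LLL _] := quadS.
by rewrite E_of_pdCG_of // LL_of_pdCG_of // EE_of_pdCG_of.
Qed.

Lemma glb_quadruplet S M : S \subset P -> is_glb P le S M ->
  [/\ E_of M = FV :&: \bigcap_(G in S) E_of G, LL_of q M = Lset p q :&: \bigcap_(G in S) LL_of q G
    & EE_of tau M = FL :&: \bigcap_(G in S) EE_of tau G].
Proof.
move=> SP glbM; rewrite (glb_unique twin_le_order glbM (inf_pdCG_glb SP)).
have quadS := is_quadruplet_inf SP; have /and3P [EFV LLL _] := quadS.
by rewrite E_of_pdCG_of // LL_of_pdCG_of // EE_of_pdCG_of.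
Qed.

Lemma set2_sub_pdCGs G H : G \in P -> H \in P -> [set G; H] \subset P.
Proof. by move=> GP HP; apply/subsetP => K /set2P [-> | ->]. Qed.

Lemma join_quadruplet G H J : G \in P -> H \in P -> is_lub P le [set G; H] J ->
  [/\ E_of J = E_of G :|: E_of H, LL_of q J = LL_of q G :|: LL_of q H
    & EE_of tau J = EE_of tau G :|: EE_of tau H].
Proof.
move=> GP HP /(lub_quadruplet (set2_sub_pdCGs GP HP)) [-> -> ->].
by rewrite !bigcup_setU !big_set1.
Qed.

Lemma meet_quadruplet G H M : G \in P -> H \in P -> is_glb P le [set G; H] M ->
  [/\ E_of M = E_of G :&: E_of H, LL_of q M = LL_of q G :&: LL_of q H
    & EE_of tau M = EE_of tau G :&: EE_of tau H].
Proof.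
move=> GP HP /(glb_quadruplet (set2_sub_pdCGs GP HP)) [-> -> ->].
rewrite !big_setU ?big_set1 //; try exact: setIid.
have [GE GLL GEE] := pdCG_quadruplet_sub GP.
by split; apply/setIidPr; apply: subset_trans (subsetIl _ _) _.
Qed.

Lemma twin_le_complete_lattice : is_complete_lattice_on P le.
Proof.
split; first exact: twin_le_order.
by move=> S SP; split; eexists; [apply: sup_pdCG_lub | apply: inf_pdCG_glb].
Qed.

Lemma twin_le_distributive : is_distributive_on P le.
Proof.
move=> G H K HK G_HK GH GK GH_GK GP HP KP lubHK glbG_HK glbGH glbGK lubGH_GK.
have [HKP _ _] := lubHK; have [GHP _ _] := glbGH; have [GKP _ _] := glbGK.
have [E_HK LL_HK EE_HK] := join_quadruplet HP KP lubHK.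
have [E1 LL1 EE1] := meet_quadruplet GP HKP glbG_HK.
have [E_GH LL_GH EE_GH] := meet_quadruplet GP HP glbGH.
have [E_GK LL_GK EE_GK] := meet_quadruplet GP KP glbGK.
have [E2 LL2 EE2] := join_quadruplet GHP GKP lubGH_GK.
apply: pdCG_eq; [by case: glbG_HK | by case: lubGH_GK | ..].
- by rewrite E1 E2 E_HK E_GH E_GK setIUr.
- by rewrite LL1 LL2 LL_HK LL_GH LL_GK setIUr.
- by rewrite EE1 EE2 EE_HK EE_GH EE_GK setIUr.
Qed.

Lemma twin_meet G H : G \in P -> H \in P ->
  exists M, [/\ is_glb P le [set G; H] M, E_of M = E_of G :&: E_of H,
               LL_of q M = LL_of q G :&: LL_of q H & EE_of tau M = EE_of tau G :&: EE_of tau H].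
Proof.
move=> GP HP; have glbGH := inf_pdCG_glb (set2_sub_pdCGs GP HP).
by exists (inf_pdCG [set G; H]); have [-> -> ->] := meet_quadruplet GP HP glbGH.
Qed.

Lemma twin_join G H : G \in P -> H \in P ->
  exists J, [/\ is_lub P le [set G; H] J, E_of J = E_of G :|: E_of H,
               LL_of q J = LL_of q G :|: LL_of q H & EE_of tau J = EE_of tau G :|: EE_of tau H].
Proof.
move=> GP HP; have lubGH := sup_pdCG_lub (set2_sub_pdCGs GP HP).
by exists (sup_pdCG [set G; H]); have [-> -> ->] := join_quadruplet GP HP lubGH.
Qed.

Lemma twin_top : exists T, [/\ T \in P, (forall G, G \in P -> le G T),
  E_of T = FV, LL_of q T = Lset p q & EE_of tau T = FL].
Proof.
have glb0 := inf_pdCG_glb (sub0set P); have [TP _ top] := glb0.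
exists (inf_pdCG set0); have [-> -> ->] := glb_quadruplet (sub0set P) glb0.
by rewrite !big_set0 !setIT; split=> // G GP; apply: top => // K; rewrite inE.
Qed.

Lemma twin_bottom : exists B, [/\ B \in P, (forall G, G \in P -> le B G),
  E_of B = set0, LL_of q B = set0 & EE_of tau B = set0].
Proof.
have lub0 := sup_pdCG_lub (sub0set P); have [BP _ bot] := lub0.
exists (sup_pdCG set0); have [-> -> ->] := lub_quadruplet (sub0set P) lub0.
by rewrite !big_set0; split=> // G GP; apply: bot => // K; rewrite inE.
Qed.

End TwinPairing.

Theorem theorem6 (p q : nat) (tau : 'I_p -> 'I_p)
    (tau_inv : involutive tau)
    (tau_LR : tau @: Lset p q = Rset p q) :
  let P := pdCGs tau in
  let le := twin_le q tau in
  [/\ is_complete_lattice_on P le /\ is_distributive_on P le,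
      (* (i) meet *)
      (forall G H, G \in P -> H \in P ->
         exists M, [/\ is_glb P le [set G; H] M,
                      E_of M = E_of G :&: E_of H,
                      LL_of q M = LL_of q G :&: LL_of q H &
                      EE_of tau M = EE_of tau G :&: EE_of tau H]),
      (* (ii) join *)
      (forall G H, G \in P -> H \in P ->
         exists J, [/\ is_lub P le [set G; H] J,
                      E_of J = E_of G :|: E_of H,
                      LL_of q J = LL_of q G :|: LL_of q H &
                      EE_of tau J = EE_of tau G :|: EE_of tau H]),
      (* maximum element 1 = (V, F_V, L, F_L), all classes atomic *)
      (exists T, [/\ T \in P, (forall G, G \in P -> le G T),
                    E_of T = FV p, LL_of q T = Lset p q & EE_of tau T = FL tau]) &
      (* minimum element 0 = (V, empty, empty, empty) *)
      (exists B, [/\ B \in P, (forall G, G \in P -> le B G),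
                    E_of B = set0, LL_of q B = set0 & EE_of tau B = set0])].
Proof.
move=> P le; split.
- split; [exact: twin_le_complete_lattice tau_inv tau_LR |
         exact: twin_le_distributive tau_inv tau_LR].
- exact: twin_meet tau_inv tau_LR.
- exact: twin_join tau_inv tau_LR.
- exact: twin_top tau_inv tau_LR.
- exact: twin_bottom tau_inv tau_LR.
Qed.
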